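(* Let $q\ge2$ be a prime power, $d\ge6$ and $2\le j\le d$. Then $|Q_j(d-3)|>|Q_j(d-2)|$.
   Context: Let $b=-q$. For integers $m\ge0$ and $l$, ${m\brack l}_b=\prod_{t=1}^{l}\frac{b^{m-t+1}-1}{b^t-1}$ for $l\ge0$ and $0$ for $l<0$. For $0\le i,j\le d$, $$Q_j(i)=\sum_{h=0}^{\min\{j,d-i\}}(-1)^j(-q)^{\binom{j-h}{2}+hd}{d-h\brack d-j}_b{d-i\brack h}_b,$$ the eigenvalues of the Hermitian forms graph $Q_q(d,j)$. *)

From mathcomp Require Import all_boot all_order all_algebra.
Set Implicit Arguments. Unset Strict Implicit. Unset Printing Implicit Defensive.
Import Order.TTheory GRing.Theory Num.Theory.
Local Open Scope ring_scope.

(* Gaussian binomial [m brack l]_b = prod_{t=1}^{l} (b^(m-t+1) - 1)/(b^t - 1),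
   for l >= 0 (l is a nat here; negative l never occurs in Q_j(i)).
   The exponent m-t+1 is taken in int, so no truncation occurs. *)
Definition gbinom (b : rat) (m l : nat) : rat :=
  \prod_(1 <= t < l.+1) ((b ^ (m%:Z - t%:Z + 1) - 1) / (b ^+ t - 1)).

(* Q_j(i) for the Hermitian forms graph, with b = -q. *)
Definition Qeig (q d j i : nat) : rat :=
  let b : rat := - (q%:R) in
  \sum_(0 <= h < (minn j (d - i)).+1)
     ((-1) ^+ j * b ^+ ('C(j - h, 2) + h * d)%N
        * gbinom b (d - h) (d - j) * gbinom b (d - i) h).

Definition prime_power (q : nat) : Prop :=
  exists p k : nat, prime p /\ (0 < k)%N /\ q = (p ^ k)%N.

From mathcomp Require Import all_boot all_order all_algebra.
From mathcomp Require Import zify ring lra.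
Set Implicit Arguments. Unset Strict Implicit. Unset Printing Implicit Defensive.
Import Order.TTheory GRing.Theory Num.Theory.
Local Open Scope ring_scope.

(* Write b = -q and t_h = b^(C(j-h,2) + h d) [d-h, d-j]_b, so that
   Q_j(i) = (-1)^j sum_h t_h [d-i, h]_b (terms with h > j vanish).  Hence
     Q_j(d-2) = (-1)^j (t_0 + [2,1] t_1 + t_2),
     Q_j(d-3) = (-1)^j (t_0 + [3,1] (t_1 + t_2) + t_3).
   The Pascal-type identity [m,l](b^(m+1) - 1) = [m+1,l](b^(m+1-l) - 1) gives the
   uniform ratio  t_(h+1) (1 - b^-(d-h)) = b^(h+1) (1 - b^-(j-h)) t_h.
   Since |b^-n| <= 2^-n, every factor 1 - b^-n is within a small explicit distance
   of 1, so after dividing by t_2 the first sum is a number in (0, 1], while the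
   second one is dominated either by q^2 - q > 0 (if j = 2, where t_3 = 0) or by
   -q^3 times a factor >= 12/17 (if j >= 3); in both cases it is larger in
   absolute value.  The file proves the Gaussian-binomial facts, the expansion of
   Q_j(i) into the terms t_h and their ratios, then the real-number estimates
   (over an arbitrary real field), and finally combines them. *)

Section GaussianBinomial.
Variable b : rat.

Lemma gbinomE m l : (l <= m.+1)%N ->
  gbinom b m l = \prod_(1 <= t < l.+1) ((b ^+ (m.+1 - t) - 1) / (b ^+ t - 1)).
Proof.
move=> hl; apply: eq_big_nat => t /andP[t1 tl].
by have -> : m%:Z - t%:Z + 1 = (m.+1 - t)%N :> int by lia.
Qed.

(* [m, l]_b vanishes for l > m: the factor t = m+1 has numerator b^0 - 1. *)
Lemma gbinom_eq0 m l : (m < l)%N -> gbinom b m l = 0.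
Proof.
move=> ml; apply/eqP; rewrite prodf_seq_eq0; apply/hasP; exists m.+1.
  by rewrite mem_index_iota ltnS.
by rewrite (_ : m%:Z - m.+1%:Z + 1 = 0) ?expr0z ?subrr ?mul0r //; lia.
Qed.

Lemma gbinom_numerator_shift m l : (l <= m.+1)%N ->
  \prod_(1 <= t < l.+1) (b ^+ (m.+1 - t) - 1) * (b ^+ m.+1 - 1) =
  \prod_(1 <= t < l.+1) (b ^+ (m.+2 - t) - 1) * (b ^+ (m.+1 - l) - 1).
Proof.
elim: l => [|l IH] hl; first by rewrite !big_geq // subn0.
rewrite !(big_nat_recr l.+1) //= mulrAC IH; last lia.
by have -> : (m.+2 - l.+1 = m.+1 - l)%N by lia.
Qed.

Lemma gbinom_step m l : (l <= m.+1)%N ->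
  gbinom b m l * (b ^+ m.+1 - 1) = gbinom b m.+1 l * (b ^+ (m.+1 - l) - 1).
Proof.
move=> hl; rewrite gbinomE // gbinomE; last lia.
by rewrite !prodf_div mulrAC gbinom_numerator_shift // mulrAC.
Qed.

Lemma gbinom0 m : gbinom b m 0 = 1.
Proof. by rewrite /gbinom big_geq. Qed.

(* From now on no denominator b^t - 1 vanishes. *)
Hypothesis not_root_of_unity : forall k, (0 < k)%N -> b ^+ k != 1.

Lemma gbinom_neq0 m l : (l <= m)%N -> gbinom b m l != 0.
Proof.
move=> hl; rewrite gbinomE; last lia.
rewrite prodf_seq_neq0; apply/allP => t; rewrite mem_index_iota => /andP[t1 tl].
by rewrite mulf_neq0 // ?invr_eq0 subr_eq0 not_root_of_unity //; lia.
Qed.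

Lemma gbinom_small :
  [/\ gbinom b 2 1 = 1 + b, gbinom b 2 2 = 1, gbinom b 3 1 = 1 + b + b ^+ 2,
      gbinom b 3 2 = 1 + b + b ^+ 2 & gbinom b 3 3 = 1].
Proof.
have [b1 b2 b3] : [/\ b - 1 != 0, b ^+ 2 - 1 != 0 & b ^+ 3 - 1 != 0].
  by split; rewrite subr_eq0 ?not_root_of_unity // -[X in X != _]expr1 not_root_of_unity.
have e2 : b ^+ 2 - 1 = (b - 1) * (1 + b) by ring.
have e3 : b ^+ 3 - 1 = (b - 1) * (1 + b + b ^+ 2) by ring.
have b2' : 1 + b != 0 by apply: contraNneq b2 => h; rewrite e2 h mulr0.
have b3' : 1 + b + b ^+ 2 != 0 by apply: contraNneq b3 => h; rewrite e3 h mulr0.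
by split; rewrite gbinomE // unlock /= ?e2 ?e3 ?expr1; field; rewrite ?b1 ?b2' ?b3'.
Qed.

End GaussianBinomial.

Definition eig_term (b : rat) (d j h : nat) : rat :=
  b ^+ ('C(j - h, 2) + h * d) * gbinom b (d - h) (d - j).

(* Terms with h > j vanish, since then d - h < d - j. *)
Lemma eig_term_eq0 b d j h : (j < h)%N -> (h <= d)%N -> eig_term b d j h = 0.
Proof. by move=> jh hd; rewrite /eig_term gbinom_eq0 ?mulr0 //; lia. Qed.

Lemma Qeig_terms q d j i :
  Qeig q d j i = (-1) ^+ j *
    \sum_(0 <= h < (d - i).+1) eig_term (- q%:R) d j h * gbinom (- q%:R) (d - i) h.
Proof.
rewrite /Qeig big_distrr /=.
have termE h : (-1) ^+ j * (- q%:R) ^+ ('C(j - h, 2) + h * d)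
    * gbinom (- q%:R) (d - h) (d - j) * gbinom (- q%:R) (d - i) h
  = (-1) ^+ j * (eig_term (- q%:R) d j h * gbinom (- q%:R) (d - i) h).
  by rewrite /eig_term !mulrA.
under eq_bigr do rewrite termE.
case: (leqP (d - i) j) => hj //.
rewrite (big_cat_nat (n := j.+1) (m := 0) (p := (d - i).+1)) //; last lia.
rewrite [X in _ = X]/= -[LHS]addr0; congr (_ + _); symmetry.
apply: big1_seq => h /andP[_]; rewrite mem_index_iota => /andP[jh hdi].
by rewrite eig_term_eq0 ?mul0r ?mulr0 //; lia.
Qed.

(* Consecutive terms: t_(h+1) (1 - b^-(d-h)) = b^(h+1) (1 - b^-(j-h)) t_h.
   For h = j both sides vanish; for h < j this is gbinom_step rescaled. *)
Lemma eig_term_ratio b d j h : b != 0 -> (h <= j)%N -> (j <= d)%N -> (h < d)%N ->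
  eig_term b d j h.+1 * (1 - b ^- (d - h)) =
  b ^+ h.+1 * (1 - b ^- (j - h)) * eig_term b d j h.
Proof.
move=> b0 hj jd hd; case: (ltngtP h j) => [hlt | hgt | <-]; [ | lia | ].
2: by rewrite subnn expr0 invr1 subrr mulr0 mul0r eig_term_eq0 ?mul0r.
have [n jn] : exists n, (j - h = n.+1)%N by exists (j - h.+1)%N; lia.
have [k dk] : exists k, (d - h = k.+1)%N by exists (d - h.+1)%N; lia.
have step := @gbinom_step b k (d - j) ltac:(lia).
rewrite (_ : (k.+1 - (d - j) = n.+1)%N) in step; last lia.
rewrite /eig_term (_ : (j - h.+1 = n)%N); last lia.
rewrite jn dk (_ : (d - h.+1 = k)%N); last lia.
rewrite binS bin1 mulSn !exprD.
have bd : b ^+ d = b ^+ h * b ^+ k.+1 by rewrite -exprD; congr (_ ^+ _); lia.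
rewrite bd (exprS b h) (exprS b n).
set B := b ^+ 'C(n, 2) * b ^+ (h * d) * b ^+ h.
have bk : b ^+ k.+1 != 0 by rewrite expf_neq0.
have bn : b ^+ n != 0 by rewrite expf_neq0.
transitivity (B * (gbinom b k (d - j) * (b ^+ k.+1 - 1))).
  by rewrite /B; field; rewrite ?bk ?bn ?b0.
by rewrite step exprS /B; field; rewrite bn b0.
Qed.

Section Numeric.
Variable R : realFieldType.
Implicit Types q v P r C : R.

Lemma pow2_le q m n : 2 <= q -> (m <= n)%N -> 2 ^+ m <= q ^+ n.
Proof.
move=> hq mn; apply: (@le_trans _ _ (2 ^+ n)); first by rewrite ler_eXn2l // ltr1n.
by rewrite lerXn2r ?nnegrE //; lra.
Qed.

Lemma negpow_norm q m n : 2 <= q -> (m <= n)%N -> `|(- q) ^- n| <= 2 ^- m.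
Proof.
move=> hq mn; have q0 : 0 < q by lra.
rewrite normfV normrX normrN (ger0_norm (ltW q0)) lef_pV2 ?posrE ?exprn_gt0 //.
exact: pow2_le.
Qed.

(* b^-n <= 1/4 for n >= 1: negative for odd n, at most q^-2 for even n. *)
Lemma negpow_le_quarter q n : 2 <= q -> (0 < n)%N -> (- q) ^- n <= 1/4.
Proof.
move=> hq n0; have q0 : 0 < q by lra.
have qn0 : 0 < q ^+ n by rewrite exprn_gt0.
rewrite exprNn -signr_odd; case: (boolP (odd n)) => [_ | even_n].
  by rewrite expr1 mulN1r invrN; have := qn0; rewrite -invr_gt0; lra.
have n2 : (2 <= n)%N by case: n n0 even_n {qn0} => [|[|n]].
rewrite expr0 mul1r mul1r lef_pV2 ?posrE //; have := pow2_le hq n2; rewrite expr2; lra.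
Qed.

Lemma negpow_not_root q n : 2 <= q -> (0 < n)%N -> (- q) ^+ n != 1.
Proof.
move=> hq n0; apply/eqP => h1; have := negpow_norm hq n0.
by rewrite h1 invr1 normr1 expr1 -[X in X <= _]invr1 lef_pV2 ?posrE //; lra.
Qed.

Lemma one_sub_negpow_bounds q m n : 2 <= q -> (0 < m)%N -> (m <= n)%N ->
  0 < 1 - (- q) ^- n <= 1 + 2 ^- m.
Proof.
move=> hq m0 mn; have := negpow_norm hq mn; rewrite ler_norml => /andP[lo hi].
have h2 : 2 ^- m <= 2 ^- 1 :> R by rewrite lef_pV2 ?posrE ?exprn_gt0 ?pow2_le.
rewrite expr1 in h2; apply/andP; split; lra.
Qed.

(* Q_j(d-2) / ((-1)^j t_2), written with v = 1/q, P = t_1 q^2 / t_2 and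
   r = -t_0 q / t_1. *)
Definition low_sum (v P r : R) : R := 1 - P * (v - v ^+ 2) - P * r * v ^+ 3.

Lemma low_sum_bounds (v P r : R) : 0 < v <= 1/2 -> 0 <= P <= 11/8 -> 0 <= r <= 65/48 ->
  0 < low_sum v P r <= 1.
Proof.
rewrite /low_sum; move=> /andP[v0 v1] /andP[P0 P1] /andP[R0 R1].
have w0 : 0 <= v - v ^+ 2 <= 1/4 by rewrite expr2; apply/andP; split; nra.
have c0 : 0 <= v ^+ 3 <= 1/8.
  have v2 : v * v <= 1/4 by nra.
  have v3 : 0 <= v * (1/4 - v * v) by apply: mulr_ge0; [exact: ltW | rewrite subr_ge0].
  apply/andP; split; first exact: exprn_ge0 (ltW v0).
  rewrite !exprS expr0 mulr1; lra.
move: w0 c0 => /andP[w0 w1] /andP[c0 c1].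
have h1 : 0 <= P * (1/4 - (v - v ^+ 2)) by apply: mulr_ge0; rewrite ?subr_ge0.
have h2 : 0 <= P * (65/48 - r) by apply: mulr_ge0; rewrite ?subr_ge0.
have h3 : 0 <= P * r * (1/8 - v ^+ 3) by apply: mulr_ge0; rewrite ?mulr_ge0 ?subr_ge0.
have h4 : 0 <= P * (v - v ^+ 2) by apply: mulr_ge0.
have h5 : 0 <= P * r * v ^+ 3 by rewrite !mulr_ge0 // ltW.
apply/andP; split; lra.
Qed.

(* When j >= 3 the cubic term -t_3 / t_2 >= (12/17) q^3 beats everything else. *)
Lemma cubic_dominates q : 2 <= q -> 27/8 + (q ^+ 2 - q) < 12/17 * q ^+ 3.
Proof. move=> hq; rewrite !exprS expr0 !mulr1; nra. Qed.

(* The main estimate after dividing by t_2: the normalized Q_j(d-3) equals the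
   normalized Q_j(d-2) plus P + q^2 - q - C q^3, with C = -t_3 / (q^3 t_2). *)
Lemma normalized_gap q P r C : 2 <= q -> 0 <= P <= 11/8 -> 0 <= r <= 65/48 ->
  C = 0 \/ 12/17 <= C ->
  `|low_sum q^-1 P r| < `|low_sum q^-1 P r + P + (q ^+ 2 - q) - C * q ^+ 3|.
Proof.
move=> hq hP hR hC.
have v_bounds : 0 < q^-1 <= 1/2.
  rewrite invr_gt0 (lt_le_trans _ hq) //= mul1r lef_pV2 ?posrE //; lra.
have /andP[s0 s1] := low_sum_bounds v_bounds hP hR.
have q2 : 2 <= q ^+ 2 - q by rewrite expr2; nra.
move: hP => /andP[P0 P1].
rewrite (gtr0_norm s0); case: hC => [-> | hC].
  by rewrite mul0r subr0 gtr0_norm; lra.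
have hq3 : 12/17 * q ^+ 3 <= C * q ^+ 3 by rewrite ler_wpM2r ?exprn_ge0 //; lra.
have hcub := cubic_dominates hq.
by rewrite ltr0_norm; lra.
Qed.

(* The comparison for any four numbers t_h linked by the ratio relations of
   eig_term_ratio whose factors a_h = 1 - b^-(d-h), c_h = 1 - b^-(j-h) satisfy
   the bounds that hold when d >= 6 (c_2 = 0 exactly when j = 2). *)
Lemma ratio_gap q t0 t1 t2 t3 a0 a1 a2 c0 c1 c2 : 2 <= q -> t2 != 0 ->
  0 < a0 <= 65/64 -> 0 < a1 <= 33/32 -> 0 < a2 <= 17/16 ->
  3/4 <= c0 -> 3/4 <= c1 -> c2 = 0 \/ 3/4 <= c2 ->
  t1 * a0 = - q * c0 * t0 -> t2 * a1 = (- q) ^+ 2 * c1 * t1 ->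
  t3 * a2 = (- q) ^+ 3 * c2 * t2 ->
  `|t0 + (1 - q) * t1 + t2| < `|t0 + (1 - q + (- q) ^+ 2) * (t1 + t2) + t3|.
Proof.
move=> hq t2n /andP[a00 a01] /andP[a10 a11] /andP[a20 a21] hc0 hc1 hc2 r0 r1 r2.
have qn : q != 0 by apply/eqP => q0; lra.
have [a0n a1n a2n] : [/\ a0 != 0, a1 != 0 & a2 != 0] by split; apply/eqP => h; lra.
have [c0n c1n] : c0 != 0 /\ c1 != 0 by split; apply/eqP => h; lra.
have t1E : t1 = t2 * a1 / ((- q) ^+ 2 * c1) by rewrite r1; field; rewrite c1n qn.
have t0E : t0 = t1 * a0 / (- q * c0) by rewrite r0; field; rewrite c0n qn.
have t3E : t3 = (- q) ^+ 3 * c2 * t2 / a2 by rewrite -r2; field; rewrite a2n.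
set s := low_sum q^-1 (a1 / c1) (a0 / c0).
have lowE : t0 + (1 - q) * t1 + t2 = t2 * s.
  by rewrite t0E t1E /s /low_sum; field; rewrite qn c0n c1n.
have highE : t0 + (1 - q + (- q) ^+ 2) * (t1 + t2) + t3 =
    t2 * (s + a1 / c1 + (q ^+ 2 - q) - c2 / a2 * q ^+ 3).
  by rewrite t0E t1E t3E /s /low_sum; field; rewrite ?qn ?c0n ?c1n ?a2n.
rewrite lowE highE !normrM ltr_pM2l ?normr_gt0 //.
apply: normalized_gap => //.
- by rewrite divr_ge0 ?ler_pdivrMr /=; lra.
- by rewrite divr_ge0 ?ler_pdivrMr /=; lra.
case: hc2 => [-> | hc2]; [left; exact: mul0r | right].
by rewrite ler_pdivlMr; lra.
Qed.

End Numeric.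

Section HermitianFormsGraph.
Variables q d j : nat.
Hypothesis q_ge2 : (2 <= q)%N.

Local Notation b := (- (q%:R) : rat).
Local Notation t := (eig_term b d j).

Lemma two_le_q : 2 <= q%:R :> rat.
Proof. by rewrite ler_nat. Qed.

Lemma b_not_root k : (0 < k)%N -> b ^+ k != 1.
Proof. exact: negpow_not_root two_le_q. Qed.

Lemma Qeig_low : (2 <= d)%N ->
  Qeig q d j (d - 2) = (-1) ^+ j * (t 0 + (1 + b) * t 1 + t 2).
Proof.
move=> d2; have [g21 g22 _ _ _] := gbinom_small b_not_root.
rewrite Qeig_terms (_ : (d - (d - 2) = 2)%N); last lia.
by rewrite unlock /= gbinom0 g21 g22; ring.
Qed.

Lemma Qeig_high : (3 <= d)%N ->
  Qeig q d j (d - 3) = (-1) ^+ j * (t 0 + (1 + b + b ^+ 2) * (t 1 + t 2) + t 3).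
Proof.
move=> d3; have [_ _ g31 g32 g33] := gbinom_small b_not_root.
rewrite Qeig_terms (_ : (d - (d - 3) = 3)%N); last lia.
by rewrite unlock /= gbinom0 g31 g32 g33; ring.
Qed.

(* t_2 is the normalizing term, so it must not vanish. *)
Lemma term2_neq0 : (2 <= j)%N -> t 2 != 0.
Proof.
move=> j2; rewrite /eig_term mulf_neq0 ?expf_neq0 ?gbinom_neq0 //; last lia.
- by rewrite oppr_eq0 pnatr_eq0; lia.
- exact: b_not_root.
Qed.

End HermitianFormsGraph.

(* Lemma 5.8. *)
Theorem lemma5p8 (q d j : nat) :
  prime_power q -> (2 <= q)%N -> (6 <= d)%N -> (2 <= j)%N -> (j <= d)%N ->
  `|Qeig q d j (d - 3)| > `|Qeig q d j (d - 2)|.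
Proof.
move=> _ hq hd hj hjd.
have b0 : - q%:R != 0 :> rat by rewrite oppr_eq0 pnatr_eq0; lia.
have r0 := @eig_term_ratio _ d j 0 b0 (leq0n j) hjd ltac:(lia).
have r1 := @eig_term_ratio _ d j 1 b0 ltac:(lia) hjd ltac:(lia).
have r2 := @eig_term_ratio _ d j 2 b0 hj hjd ltac:(lia).
rewrite !subn0 expr1 in r0.
have a_bound m n : (0 < m)%N -> (m <= n)%N -> 0 < 1 - (- q%:R : rat) ^- n <= 1 + 2 ^- m.
  exact: one_sub_negpow_bounds (two_le_q hq).
have c_bound n : (0 < n)%N -> 3/4 <= 1 - (- q%:R : rat) ^- n.
  by move=> n0; have := negpow_le_quarter (two_le_q hq) n0; lra.
rewrite Qeig_high ?Qeig_low ?normrM ?ltr_pM2l ?normr_gt0 ?signr_eq0 //; try lia.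
apply: (ratio_gap (two_le_q hq) (term2_neq0 _ hq hj) _ _ _ _ _ _ r0 r1 r2).
- by apply: (a_bound 6%N); lia.
- by apply: (a_bound 5%N); lia.
- by apply: (a_bound 4%N); lia.
- by apply: c_bound; lia.
- by apply: c_bound; lia.
have [-> | j3] := eqVneq j 2%N; last by right; apply: c_bound; lia.
by left; rewrite subnn expr0 invr1 subrr.
Qed.
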